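(* Let $(Y,\preceq,\prec,\to)$ be a solid vector space. Then the collection of all open intervals $(a,b)=\{x\in Y: a\prec x\prec b\}$, where $a,b\in Y$ with $a\prec b$, is a basis for a Hausdorff topology on $Y$.
   Context: Vector space with convergence: a real vector space $Y$ with a relation $\to$ between sequences in $Y$ and points of $Y$ (uniqueness of limits not assumed) such that (C1) $x_n\to x$, $y_n\to y$ imply $x_n+y_n\to x+y$; (C2) $x_n\to x$, $\lambda\in\mathbb R$ imply $\lambda x_n\to\lambda x$; (C3) $\lambda_n\to\lambda$ in $\mathbb R$ imply $\lambda_n x\to\lambda x$. $A\subseteq Y$ is open if $x_n\to x\in A$ implies $x_n\in A$ for all but finitely many $n$; closed if $x_n\to x$, $x_n\in A$ $\forall n$ imply $x\in A$; $A^\circ$ is the union of all open subsets of $A$. A cone is a nonempty closed $K$ with $\lambda K\subseteq K$ ($\lambda\ge0$), $K+K\subseteq K$, $K\cap(-K)=\{0\}$; solid if $K\neq\{0\}$ and $K^\circ\neq\emptyset$. A vector ordering is a partial order $\preceq$ with (V1) $x\preceq y\Rightarrow x+z\preceq y+z$; (V2) $\lambda\ge0$, $x\preceq y\Rightarrow\lambda x\preceq\lambda y$; (V3) $x_n\to x$, $y_n\to y$, $x_n\preceq y_n$ $\forall n\Rightarrow x\preceq y$. A solid vector space $(Y,\preceq,\prec,\to)$ is such an ordered vector space whose positive cone $K=\{x:x\succeq0\}$ is solid, with $x\prec y$ iff $y-x\in K^\circ$. *)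

From HB Require Import structures.
From mathcomp Require Import all_boot all_order all_algebra.
From mathcomp Require Import all_classical all_reals all_analysis.
Set Implicit Arguments. Unset Strict Implicit. Unset Printing Implicit Defensive.
Import Order.TTheory GRing.Theory Num.Theory.
Import numFieldNormedType.Exports.
Local Open Scope classical_set_scope.
Local Open Scope ring_scope.

Section Defs.
Variables (R : realType) (Y : lmodType R).
Variable conv : (nat -> Y) -> Y -> Prop.

(* Vector space with convergence: axioms (C1)-(C3). *)
Definition conv_space : Prop :=
  [/\ (forall (x y : nat -> Y) a b, conv x a -> conv y b ->
          conv (fun n => x n + y n) (a + b)),
      (forall (x : nat -> Y) a (l : R), conv x a -> conv (fun n => l *: x n) (l *: a)) &
      (forall (l : nat -> R) (lam : R) (x : Y), l @ \oo --> lam ->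
          conv (fun n => l n *: x) (lam *: x))].

Definition conv_open (A : set Y) : Prop :=
  forall (u : nat -> Y) x, conv u x -> A x -> exists N, forall n, (N <= n)%N -> A (u n).

Definition conv_closed (A : set Y) : Prop :=
  forall (u : nat -> Y) x, conv u x -> (forall n, A (u n)) -> A x.

Definition conv_interior (A : set Y) : set Y :=
  [set x | exists U : set Y, [/\ conv_open U, U `<=` A & U x]].

Definition is_cone (K : set Y) : Prop :=
  [/\ K !=set0, conv_closed K,
      (forall (l : R) x, 0 <= l -> K x -> K (l *: x)),
      (forall x y, K x -> K y -> K (x + y)) &
      (forall x, K x -> K (- x) -> x = 0)].

Definition is_solid_cone (K : set Y) : Prop :=
  [/\ is_cone K, K <> [set 0] & conv_interior K !=set0].

Definition vector_ordering (le : Y -> Y -> Prop) : Prop :=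
  [/\ (forall x, le x x),
      (forall x y, le x y -> le y x -> x = y) &
      (forall x y z, le x y -> le y z -> le x z)] /\
  [/\
      (forall x y z, le x y -> le (x + z) (y + z)),
      (forall (l : R) x y, 0 <= l -> le x y -> le (l *: x) (l *: y)) &
      (forall (x y : nat -> Y) a b, conv x a -> conv y b ->
          (forall n, le (x n) (y n)) -> le a b)].

Definition solid_vector_space (le lt : Y -> Y -> Prop) : Prop :=
  [/\ conv_space, vector_ordering le,
      is_solid_cone [set x | le 0 x] &
      (forall x y, lt x y <-> conv_interior [set z | le 0 z] (y - x))].

End Defs.

Definition open_interval (Y : Type) (lt : Y -> Y -> Prop) (a b : Y) : set Y :=
  [set x | lt a x /\ lt x b].

Definition is_topology_basis (Y : Type) (B : set (set Y)) : Prop :=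
  (forall x : Y, exists U, B U /\ U x) /\
  (forall U V x, B U -> B V -> U x -> V x ->
     exists W, [/\ B W, W x & W `<=` U `&` V]).

Definition basis_generated_open (Y : Type) (B : set (set Y)) (O : set Y) : Prop :=
  forall x, O x -> exists U, [/\ B U, U x & U `<=` O].

Definition hausdorff_opens (Y : Type) (isopen : set Y -> Prop) : Prop :=
  forall x y : Y, x <> y -> exists U V,
    [/\ isopen U, isopen V, U x, V y & U `&` V = set0].

From HB Require Import structures.
From mathcomp Require Import all_boot all_order all_algebra.
From mathcomp Require Import all_classical all_reals all_analysis.
Import Order.TTheory GRing.Theory Num.Theory.
Import numFieldNormedType.Exports.
Local Open Scope classical_set_scope.
Local Open Scope ring_scope.

(* The interior K° of the positive cone satisfies K° + K `<=` K° and
   (0,oo) K° `<=` K°, so the relation [a < b] is translation invariant and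
   [x - e < x < x + e] for every [e] in K°.  Around a point of an interval
   (a, b) the intervals (x - t e, x + t e) are eventually contained in (a, b),
   because [x - a] and [b - x] lie in the open set K° and [t e -> 0] as
   [t -> 0] by (C1) and (C3); this gives the basis property.  If the intervals
   of radius [t e] around x and y meet for every t > 0, then
   [+-(y - x) + 2 t e] is in K for every t, so [+-(y - x)] is in the closed
   set K and y = x. *)

Section ConvergenceVectorSpace.
Context {R : realType} {Y : lmodType R} {conv : (nat -> Y) -> Y -> Prop}.
Hypothesis conv_add : forall {x y : nat -> Y} {a b}, conv x a -> conv y b ->
  conv (fun n => x n + y n) (a + b).
Hypothesis conv_scale : forall {x : nat -> Y} {a} (l : R), conv x a ->
  conv (fun n => l *: x n) (l *: a).
Hypothesis conv_scalel : forall {l : nat -> R} {lam : R} (x : Y), l @ \oo --> lam ->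
  conv (fun n => l n *: x) (lam *: x).

Lemma conv_interior_sub (A : set Y) : conv_interior conv A `<=` A.
Proof. by move=> x [U [_ UA Ux]]; apply: UA. Qed.

Lemma conv_cst (v : Y) : conv (fun=> v) v.
Proof.
have one : (fun=> 1 : R) @ \oo --> (1 : R) by apply: cvg_cst.
by have := conv_scalel v one; rewrite scale1r.
Qed.

Lemma conv_add_vanishing (p e : Y) {l : nat -> R} : l @ \oo --> 0 ->
  conv (fun n => p + l n *: e) p.
Proof.
by move=> l0; rewrite -[X in conv _ X]addr0 -(scale0r e); apply: conv_add;
  [apply: conv_cst | apply: conv_scalel].
Qed.

Lemma conv_closed_add_vanishing {A : set Y} {p : Y} (e : Y) {l : nat -> R} :
  conv_closed conv A -> l @ \oo --> 0 -> (forall n, A (p + l n *: e)) -> A p.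
Proof. by move=> Acl l0; apply: Acl; apply: conv_add_vanishing. Qed.

Lemma near_conv_interior_sub (A : set Y) (p e : Y) :
  conv_interior conv A p -> \forall n \near \oo, A (p - harmonic n *: e).
Proof.
case=> U [Uo UA Up].
have h0 : (fun n => - harmonic n : R) @ \oo --> 0.
  by rewrite -oppr0; apply: cvgN; apply: cvg_harmonic.
have [N UN] := Uo _ _ (conv_add_vanishing p e h0) Up.
apply: filterS (nbhs_infty_ge N) => n /UN.
by rewrite scaleNr => /UA.
Qed.

Context {K : set Y}.
Hypothesis K_add : forall {x y}, K x -> K y -> K (x + y).
Hypothesis K_scale : forall {l : R} {x}, 0 <= l -> K x -> K (l *: x).

Let Ki := conv_interior conv K.

Lemma conv_interior_addr (x k : Y) : Ki x -> K k -> Ki (x + k).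
Proof.
case=> U [Uo UK Ux] Kk; exists [set z | U (z - k)]; split => /=.
- move=> u z uz Uz; have [N UN] := Uo _ _ (conv_add uz (conv_cst (- k))) Uz.
  by exists N.
- by move=> z /UK Kz; rewrite -(subrK k z); apply: K_add.
- by rewrite addrK.
Qed.

Lemma conv_interior_scale {c : R} {x : Y} : 0 < c -> Ki x -> Ki (c *: x).
Proof.
move=> c_gt0 [U [Uo UK Ux]]; have c_neq0 : c != 0 by rewrite gt_eqF.
exists [set z | U (c^-1 *: z)]; split => /=.
- move=> u z uz Uz; have [N UN] := Uo _ _ (conv_scale c^-1 uz) Uz.
  by exists N.
- move=> z /UK /(K_scale (ltW c_gt0)).
  by rewrite scalerA mulfV // scale1r.
- by rewrite scalerA mulVf // scale1r.
Qed.

Context {lt : Y -> Y -> Prop}.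
Hypothesis ltE : forall x y, lt x y <-> Ki (y - x).

Lemma lt_le_trans {a b c : Y} : lt a b -> K (c - b) -> lt a c.
Proof.
rewrite !ltE => ab cb; rewrite -(subrK b c) -addrA addrC.
by apply: conv_interior_addr; rewrite // addrC.
Qed.

Lemma le_lt_trans {a b c : Y} : K (b - a) -> lt b c -> lt a c.
Proof.
rewrite !ltE => ba cb; rewrite -(subrK b c) -addrA.
exact: conv_interior_addr.
Qed.

Lemma lt_trans {a b c : Y} : lt a b -> lt b c -> lt a c.
Proof. by move=> ab /ltE /conv_interior_sub; apply: lt_le_trans. Qed.

Definition order_ball (x e : Y) : set Y := open_interval lt (x - e) (x + e).

Definition interval_basis : set (set Y) :=
  [set U | exists a b, lt a b /\ U = open_interval lt a b].

Lemma order_ball_center (x : Y) {e : Y} : Ki e -> order_ball x e x.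
Proof.
by move=> Kie; split; rewrite ltE; [rewrite opprB addrC subrK | rewrite addrC addKr].
Qed.

Lemma order_ball_basis (x e : Y) : Ki e -> interval_basis (order_ball x e).
Proof.
move=> Kie; have [lx xr] := order_ball_center x Kie.
by exists (x - e), (x + e); split => //; apply: (lt_trans lx xr).
Qed.

Lemma near_order_ball_sub (e : Y) {a b x : Y} : lt a x -> lt x b ->
  \forall n \near \oo, order_ball x (harmonic n *: e) `<=` open_interval lt a b.
Proof.
rewrite !ltE => /near_conv_interior_sub ax /near_conv_interior_sub xb.
near=> n => y [ly ry]; split.
- apply: (le_lt_trans _ ly); rewrite addrAC.
  by near: n; apply: ax.
- apply: (lt_le_trans ry); rewrite opprD addrA.
  by near: n; apply: xb.
Unshelve. all: by end_near.
Qed.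

Lemma order_balls_meet (x y e : Y) :
  order_ball x e `&` order_ball y e !=set0 -> K (y - x + (e + e)).
Proof.
case=> z [[xz _] [_ zy]]; have /ltE/conv_interior_sub := lt_trans xz zy.
by rewrite opprB [e - x]addrC addrACA.
Qed.

Hypothesis K_closed : conv_closed conv K.
Hypothesis K_anti : forall x, K x -> K (- x) -> x = 0.

Lemma order_balls_separate {e x y : Y} : Ki e -> x <> y ->
  exists n, order_ball x (harmonic n *: e) `&` order_ball y (harmonic n *: e) = set0.
Proof.
move=> Kie; apply: contra_notP => meet.
have ball_meet n : order_ball x (harmonic n *: e) `&` order_ball y (harmonic n *: e) !=set0.
  by apply/set0P/eqP => ballx; apply: meet; exists n.
have h0 : (fun n => harmonic n + harmonic n : R) @ \oo --> 0.
  by rewrite -(addr0 0); apply: cvgD; apply: cvg_harmonic.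
have Kyx : K (y - x).
  apply: (conv_closed_add_vanishing e K_closed h0) => n.
  by rewrite scalerDl; apply: order_balls_meet.
have Kxy : K (x - y).
  apply: (conv_closed_add_vanishing e K_closed h0) => n.
  by rewrite scalerDl; apply: order_balls_meet; rewrite setIC.
by apply/eqP; rewrite eq_sym -subr_eq0; apply/eqP/K_anti; rewrite ?opprB.
Qed.

End ConvergenceVectorSpace.

Arguments order_ball {R Y} lt x e.
Arguments interval_basis {R Y} lt.

Theorem theorem6p2 (R : realType) (Y : lmodType R)
  (conv : (nat -> Y) -> Y -> Prop) (le lt : Y -> Y -> Prop) :
  solid_vector_space conv le lt ->
  let B := [set U : set Y | exists a b, lt a b /\ U = open_interval lt a b] in
  is_topology_basis B /\ hausdorff_opens (basis_generated_open B).
Proof.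
case=> [[cadd cscale cscalel] _ [[_ Kcl Kscale Kadd Kanti] _ [e Kie]] ltE] B.
have ball_center := order_ball_center ltE.
have ball_basis := order_ball_basis cadd cscalel Kadd ltE.
have ball_open x r : conv_interior conv [set z | le 0 z] r ->
    basis_generated_open B (order_ball lt x r).
  by move=> Kir z ball_z; exists (order_ball lt x r); split => //; apply: ball_basis.
split; first split.
- by move=> x; exists (order_ball lt x e); split; [apply: ball_basis | apply: ball_center].
- move=> _ _ x [a [b [_ ->]]] [c [d [_ ->]]] [ax xb] [cx xd].
  have [n [abn cdn]] := filter_ex (filterI
    (near_order_ball_sub cadd cscalel Kadd ltE e ax xb)
    (near_order_ball_sub cadd cscalel Kadd ltE e cx xd)).
  have Kien := conv_interior_scale cscale Kscale (harmonic_gt0 n) Kie.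
  exists (order_ball lt x (harmonic n *: e)); split; [exact: ball_basis | exact: ball_center |].
  by move=> y ball_y; split; [apply: abn | apply: cdn].
- move=> x y xy.
  have [n sep] := order_balls_separate cadd cscalel Kadd ltE Kcl Kanti Kie xy.
  have Kien := conv_interior_scale cscale Kscale (harmonic_gt0 n) Kie.
  by exists (order_ball lt x (harmonic n *: e)), (order_ball lt y (harmonic n *: e));
    split; [apply: ball_open | apply: ball_open | apply: ball_center | apply: ball_center |].
Qed.
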